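(* Let $W$ and $V$ be binary-input channels such that $V$ is less noisy than $W$. Then for every $n\ge1$ and every $\mathbf{s}\in\{-,+\}^n$, $V^{\mathbf{s}}$ is less noisy than $W^{\mathbf{s}}$; in particular $I(W^{\mathbf{s}})\le I(V^{\mathbf{s}})$.
   Context: A binary-input channel $W\colon\{0,1\}\to\mathcal{Y}$ is a family of transition probabilities $W(y\mid x)$ on a discrete output alphabet; its symmetric capacity $I(W)$ is the mutual information (in bits) between a uniform input in $\{0,1\}$ and the output. A channel $V$ is less noisy than a channel $W$ with the same input alphabet if $I(T;Y)\le I(T;Z)$ for every joint distribution of the form $p(t,x,y,z)=p(x,t)W(y\mid x)V(z\mid x)$. For a binary-input channel $W$, define $W^-(y_1,y_2\mid u_1)=\sum_{u_2\in\{0,1\}}\tfrac12 W(y_1\mid u_1+u_2)W(y_2\mid u_2)$ and $W^+(y_1,y_2,u_1\mid u_2)=\tfrac12 W(y_1\mid u_1+u_2)W(y_2\mid u_2)$ (addition mod 2), and recursively $W^{s_1\cdots s_n}=(W^{s_1\cdots s_{n-1}})^{s_n}$ for $\mathbf{s}=(s_1,\dots,s_n)\in\{-,+\}^n$. *)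

From mathcomp Require Import all_boot.
From Stdlib Require Import Reals.
Set Implicit Arguments. Unset Strict Implicit. Unset Printing Implicit Defensive.

Local Open Scope R_scope.

Notation "\rsum_ ( i : T ) F" := (\big[Rplus/0%R]_(i : T) F)
  (at level 41, F at level 41, i, T at level 50) : R_scope.

(* A binary-input channel with output alphabet Y: W x y = W(y | x). *)
Definition chan (Y : finType) := bool -> Y -> R.

Definition is_channel (Y : finType) (W : chan Y) : Prop :=
  (forall x y, 0 <= W x y) /\ (forall x, \rsum_(y : Y) W x y = 1).

Definition log2 (x : R) : R := ln x / ln 2.

Definition margA (A B : finType) (p : A -> B -> R) (a : A) : R :=
  \rsum_(b : B) p a b.
Definition margB (A B : finType) (p : A -> B -> R) (b : B) : R :=
  \rsum_(a : A) p a b.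
Definition mutinfo (A B : finType) (p : A -> B -> R) : R :=
  \rsum_(a : A) \rsum_(b : B)
    (if Rlt_dec 0 (p a b)
     then p a b * log2 (p a b / (margA p a * margB p b))
     else 0).

Definition symcap (Y : finType) (W : chan Y) : R :=
  mutinfo (fun (x : bool) (y : Y) => / 2 * W x y).

Definition is_dist2 (T : finType) (p : bool -> T -> R) : Prop :=
  (forall x t, 0 <= p x t) /\ \rsum_(x : bool) \rsum_(t : T) p x t = 1.

Definition less_noisy (Z Y : finType) (V : chan Z) (W : chan Y) : Prop :=
  forall (T : finType) (p : bool -> T -> R), is_dist2 p ->
    mutinfo (fun (t : T) (y : Y) => \rsum_(x : bool) p x t * W x y)
    <= mutinfo (fun (t : T) (z : Z) => \rsum_(x : bool) p x t * V x z).

Definition minus_chan (Y : finType) (W : chan Y) : chan (Y * Y)%type :=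
  fun u1 y => \rsum_(u2 : bool) / 2 * W (addb u1 u2) y.1 * W u2 y.2.

Definition plus_chan (Y : finType) (W : chan Y) : chan (Y * Y * bool)%type :=
  fun u2 y => / 2 * W (addb y.2 u2) y.1.1 * W u2 y.1.2.

(* sign encoding: true = '+', false = '-' *)
Definition outT1 (Y : finType) (b : bool) : finType :=
  if b then ((Y * Y * bool)%type : finType) else ((Y * Y)%type : finType).

Definition polar1 (Y : finType) (b : bool) (W : chan Y) : chan (outT1 Y b) :=
  if b as b' return chan (outT1 Y b') then plus_chan W else minus_chan W.

(* W^{s_1 ... s_n} = (W^{s_1 ... s_{n-1}})^{s_n}: s_1 is applied first. *)
Fixpoint outT (Y : finType) (s : seq bool) : finType :=
  match s with
  | [::] => Y
  | b :: s' => outT (outT1 Y b) s'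
  end.

Fixpoint polar (Y : finType) (s : seq bool) : chan Y -> chan (outT Y s) :=
  match s as s' return chan Y -> chan (outT Y s') with
  | [::] => fun W => W
  | b :: s' => fun W => @polar (outT1 Y b) s' (@polar1 Y b W)
  end.

Arguments polar1 {Y} b W _ _.
Arguments polar {Y} s W _ _.

(* Work in nats with the unnormalized information functional
     info q = Σ q ln q - Σ_t qT ln qT - Σ_o qO ln qO + |q| ln |q|
   of a nonnegative measure q on T x O; for |q| = 1 it is I(T;O) ln 2, and it is
   positively homogeneous.  Hence "V is less noisy than W" is equivalent to the
   same inequality for all nonnegative (not necessarily normalized) input
   measures p(x,t) ([less_noisy_meas]).  The chain rule
   info(T; B,Y) = info(T; B) + Σ_b info(T; Y | b) then yields the key step
   [info_le_side]: if the output is (B, Y), where given (b, x) the component Y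
   is produced by W, then replacing W by V does not decrease the information,
   because the B-marginal does not depend on the channel.  Each of W^- and W^+
   uses two copies of W; replacing them by V one at a time (the second time
   after relabelling the output alphabet) shows that V^- and V^+ are less noisy
   than W^- and W^+.
   Induction on s gives V^s less noisy than W^s, and the capacity inequality
   is the special case T = {0,1}, t = x uniform. *)
From HB Require Import structures.
From mathcomp Require Import all_boot.
From Stdlib Require Import Reals Lra.
Set Implicit Arguments. Unset Strict Implicit. Unset Printing Implicit Defensive.
Local Open Scope R_scope.

HB.instance Definition _ := Monoid.isComLaw.Build R 0 Rplus
  (fun x y z => esym (Rplus_assoc x y z)) Rplus_comm Rplus_0_l.
HB.instance Definition _ := Monoid.isComLaw.Build R 1 Rmult
  (fun x y z => esym (Rmult_assoc x y z)) Rmult_comm Rmult_1_l.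
HB.instance Definition _ := Monoid.isMulLaw.Build R 0 Rmult Rmult_0_l Rmult_0_r.
HB.instance Definition _ := Monoid.isAddLaw.Build R Rmult Rplus
  Rmult_plus_distr_r Rmult_plus_distr_l.

Section RealSums.
Variable I : finType.
Implicit Types F G : I -> R.

Lemma rsum_ge0 F : (forall i, 0 <= F i) -> 0 <= \rsum_(i : I) F i.
Proof. by move=> F0; apply: big_ind => //; [lra | move=> x y; lra]. Qed.

Lemma rsum_le F G : (forall i, F i <= G i) -> \rsum_(i : I) F i <= \rsum_(i : I) G i.
Proof. by move=> FG; apply: big_ind2 => //; [lra | move=> *; lra]. Qed.

Lemma rsum_term F j : (forall i, 0 <= F i) -> F j <= \rsum_(i : I) F i.
Proof.
move=> F0; rewrite (bigD1 j) //=.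
have : 0 <= \big[Rplus/0]_(i | i != j) F i by apply: big_ind => //; [lra | move=> x y; lra].
lra.
Qed.

(* Distributivity, restated with Rmult itself (not the monoid-law projection)
   so that the results can be rewritten further. *)
Lemma rsum_mulr c F : \rsum_(i : I) (c * F i) = c * \rsum_(i : I) F i.
Proof. by rewrite big_distrr. Qed.

Lemma rsum_mull c F : (\rsum_(i : I) F i) * c = \rsum_(i : I) (F i * c).
Proof. by rewrite big_distrl. Qed.

Lemma rsum_sub F G : \rsum_(i : I) (F i - G i) = \rsum_(i : I) F i - \rsum_(i : I) G i.
Proof.
rewrite (eq_bigr (fun i => F i + (-1) * G i)) => [|i _]; last by ring.
by rewrite big_split /= rsum_mulr; ring.
Qed.

End RealSums.

Lemma rsum_pair (A B : finType) (F : A * B -> R) :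
  \rsum_(o : A * B) F o = \rsum_(a : A) \rsum_(b : B) F (a, b).
Proof. by rewrite pair_bigA; apply: eq_bigr => -[a b] _. Qed.

Lemma rsum_prod (A B : finType) (f : A -> R) (g : B -> R) :
  \rsum_(o : A * B) (f o.1 * g o.2) = (\rsum_(a : A) f a) * (\rsum_(b : B) g b).
Proof. by rewrite rsum_pair rsum_mull; apply: eq_bigr => a _ /=; rewrite -rsum_mulr. Qed.

(* x ln x; it vanishes at 0, matching the convention 0 log 0 = 0. *)
Definition xlnx (x : R) : R := x * ln x.

Lemma xlnx_scale c x : 0 < c -> 0 <= x -> xlnx (c * x) = c * xlnx x + c * ln c * x.
Proof.
move=> c0 /Rle_lt_or_eq_dec [x0|<-]; rewrite /xlnx; last by ring.
by rewrite ln_mult //; ring.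
Qed.

Lemma rsum_xlnx_scale (I : finType) c (F : I -> R) : 0 < c -> (forall i, 0 <= F i) ->
  \rsum_(i : I) xlnx (c * F i)
  = c * (\rsum_(i : I) xlnx (F i)) + c * ln c * (\rsum_(i : I) F i).
Proof.
move=> c0 F0; rewrite (eq_bigr _ (fun i _ => xlnx_scale c0 (F0 i))) big_split /=.
by rewrite !rsum_mulr.
Qed.

Definition info (T O : finType) (q : T -> O -> R) : R :=
  (\rsum_(t : T) \rsum_(o : O) xlnx (q t o)) - (\rsum_(t : T) xlnx (\rsum_(o : O) q t o))
  - (\rsum_(o : O) xlnx (\rsum_(t : T) q t o)) + xlnx (\rsum_(t : T) \rsum_(o : O) q t o).

Section InfoFunctional.
Variables T O : finType.
Implicit Types q r : T -> O -> R.

Lemma info_ext q r : (forall t o, q t o = r t o) -> info q = info r.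
Proof.
move=> qr; rewrite /info.
have rows t : \rsum_(o : O) q t o = \rsum_(o : O) r t o by apply: eq_bigr.
have cols o : \rsum_(t : T) q t o = \rsum_(t : T) r t o by apply: eq_bigr.
congr (_ - _ - _ + xlnx _).
- by apply: eq_bigr => t _; apply: eq_bigr => o _; rewrite qr.
- by apply: eq_bigr => t _; rewrite rows.
- by apply: eq_bigr => o _; rewrite cols.
- by apply: eq_bigr => t _; rewrite rows.
Qed.

Lemma info_reindex (O' : finType) (f : O' -> O) q :
  bijective f -> info q = info (fun t o => q t (f o)).
Proof.
move=> bf; have sumf (G : O -> R) : \rsum_(o : O) G o = \rsum_(o : O') G (f o).
  by rewrite (reindex f) //; exact: onW_bij.
rewrite /info; congr (_ - _ - _ + xlnx _).
- by apply: eq_bigr => t _; rewrite sumf.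
- by apply: eq_bigr => t _; rewrite sumf.
- exact: (sumf (fun o => xlnx (\rsum_(t : T) q t o))).
- by apply: eq_bigr => t _; rewrite sumf.
Qed.

Lemma info_scale c q : 0 < c -> (forall t o, 0 <= q t o) ->
  info (fun t o => c * q t o) = c * info q.
Proof.
move=> c0 q0.
have rows0 t : 0 <= \rsum_(o : O) q t o by apply: rsum_ge0.
have cols0 o : 0 <= \rsum_(t : T) q t o by apply: rsum_ge0.
have tot0 : 0 <= \rsum_(t : T) \rsum_(o : O) q t o by apply: rsum_ge0.
have rows t : \rsum_(o : O) c * q t o = c * \rsum_(o : O) q t o by rewrite rsum_mulr.
have cols o : \rsum_(t : T) c * q t o = c * \rsum_(t : T) q t o by rewrite rsum_mulr.
rewrite /info (eq_bigr _ (fun t _ => rsum_xlnx_scale c0 (q0 t))).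
rewrite (eq_bigr _ (fun t _ => congr1 xlnx (rows t))) (eq_bigr _ (fun o _ => congr1 xlnx (cols o))).
rewrite (eq_bigr _ (fun t _ => rows t)) rsum_mulr xlnx_scale //.
rewrite (rsum_xlnx_scale c0 rows0) (rsum_xlnx_scale c0 cols0) big_split /= !rsum_mulr.
rewrite [\rsum_(o : O) \rsum_(t : T) _]exchange_big /=; ring.
Qed.

Lemma info_zero : info (fun (t : T) (o : O) => 0) = 0.
Proof. by rewrite /info !big1 // => *; rewrite /xlnx Rmult_0_l; ring. Qed.

End InfoFunctional.

Lemma info_chain (T B Y : finType) (q : T -> B * Y -> R) :
  info q = info (fun t b => \rsum_(y : Y) q t (b, y))
           + \rsum_(b : B) info (fun t y => q t (b, y)).
Proof.
rewrite /info big_split /= !rsum_sub.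
under eq_bigr => t _ do rewrite rsum_pair.
under [X in _ - X - _ + _ = _]eq_bigr => t _ do rewrite rsum_pair.
rewrite rsum_pair.
have tot : \rsum_(t : T) \rsum_(o : B * Y) q t o = \rsum_(t : T) \rsum_(b : B) \rsum_(y : Y) q t (b, y).
  by apply: eq_bigr => t _; exact: rsum_pair.
rewrite tot [\rsum_(b : B) \rsum_(t : T) \rsum_(y : Y) _]exchange_big.
rewrite [\rsum_(b : B) \rsum_(t : T) xlnx _]exchange_big /=; ring.
Qed.

Lemma ln2_pos : 0 < ln 2.
Proof. by rewrite -ln_1; apply: ln_increasing; lra. Qed.

Lemma mutinfo_info (A B : finType) (q : A -> B -> R) :
  (forall a b, 0 <= q a b) -> \rsum_(a : A) \rsum_(b : B) q a b = 1 ->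
  mutinfo q = info q / ln 2.
Proof.
move=> q0 q1; have l2 := ln2_pos.
suff <- : mutinfo q * ln 2 = info q by field; lra.
have term a b :
  (if Rlt_dec 0 (q a b) then q a b * log2 (q a b / (margA q a * margB q b)) else 0) * ln 2
  = xlnx (q a b) - q a b * ln (margA q a) - q a b * ln (margB q b).
  case: Rlt_dec => [qpos|qle] /=; last first.
    have -> : q a b = 0 by have := q0 a b; lra.
    by rewrite /xlnx; ring.
  have hA : 0 < margA q a by have := rsum_term b (q0 a); rewrite /margA; lra.
  have hB : 0 < margB q b.
    by have := @rsum_term A (fun a => q a b) a (q0^~ b); rewrite /margB; lra.
  have hAB := Rmult_lt_0_compat _ _ hA hB.
  rewrite /log2 /xlnx /Rdiv ln_mult ?ln_Rinv ?ln_mult //; last exact: Rinv_0_lt_compat.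
  by field; lra.
rewrite /mutinfo rsum_mull.
under eq_bigr => a _ do rewrite rsum_mull.
under eq_bigr => a _ do under eq_bigr => b _ do rewrite term.
under eq_bigr => a _ do rewrite !rsum_sub.
rewrite !rsum_sub.
have rows : \rsum_(a : A) \rsum_(b : B) q a b * ln (margA q a)
            = \rsum_(a : A) xlnx (\rsum_(b : B) q a b).
  by apply: eq_bigr => a _; rewrite -rsum_mull.
have cols : \rsum_(a : A) \rsum_(b : B) q a b * ln (margB q b)
            = \rsum_(b : B) xlnx (\rsum_(a : A) q a b).
  by rewrite exchange_big; apply: eq_bigr => b _; rewrite -rsum_mull.
by rewrite rows cols /info q1 /xlnx ln_1; ring.
Qed.

Lemma mutinfo_ext (A B : finType) (p q : A -> B -> R) :
  (forall a b, p a b = q a b) -> mutinfo p = mutinfo q.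
Proof.
move=> pq; have mA a : margA p a = margA q a by apply: eq_bigr.
have mB b : margB p b = margB q b by apply: eq_bigr.
by rewrite /mutinfo; apply: eq_bigr => a _; apply: eq_bigr => b _; rewrite pq mA mB.
Qed.

Definition out (Y T : finType) (p : bool -> T -> R) (W : chan Y) (t : T) (y : Y) : R :=
  \rsum_(x : bool) p x t * W x y.

Section ChannelOutput.
Variables (Y T : finType) (W : chan Y).
Hypothesis chW : is_channel W.

Lemma out_ge0 (p : bool -> T -> R) : (forall x t, 0 <= p x t) -> forall t y, 0 <= out p W t y.
Proof.
move=> p0 t y; apply: rsum_ge0 => x.
by apply: Rmult_le_pos; [exact: p0 | exact: chW.1].
Qed.

Lemma out_row (p : bool -> T -> R) t : \rsum_(y : Y) out p W t y = \rsum_(x : bool) p x t.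
Proof.
rewrite /out exchange_big; apply: eq_bigr => x _.
by rewrite rsum_mulr chW.2 Rmult_1_r.
Qed.

Lemma out_mass (p : bool -> T -> R) :
  \rsum_(t : T) \rsum_(y : Y) out p W t y = \rsum_(x : bool) \rsum_(t : T) p x t.
Proof. by rewrite [RHS]exchange_big; apply: eq_bigr => t _; exact: out_row. Qed.

End ChannelOutput.

Definition less_noisy_meas (Z Y : finType) (V : chan Z) (W : chan Y) : Prop :=
  forall (T : finType) (p : bool -> T -> R), (forall x t, 0 <= p x t) ->
    info (out p W) <= info (out p V).

Section LessNoisyMeasure.
Variables (Y Z : finType) (W : chan Y) (V : chan Z).
Hypotheses (chW : is_channel W) (chV : is_channel V).

Lemma less_noisy_of_meas : less_noisy_meas V W -> less_noisy V W.
Proof.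
move=> lnVW T p [p0 p1].
rewrite -/(out p W) -/(out p V).
rewrite (mutinfo_info (out_ge0 chW p0)) ?(out_mass chW) //.
rewrite (mutinfo_info (out_ge0 chV p0)) ?(out_mass chV) //.
apply: Rmult_le_compat_r; last exact: lnVW.
by apply/Rlt_le/Rinv_0_lt_compat/ln2_pos.
Qed.

(* Normalize p by its total mass S, using homogeneity of info; S = 0 is trivial. *)
Lemma meas_of_less_noisy : less_noisy V W -> less_noisy_meas V W.
Proof.
move=> lnVW T p p0.
pose S := \rsum_(x : bool) \rsum_(t : T) p x t.
have : 0 <= S by apply: rsum_ge0 => x; apply: rsum_ge0.
case/Rle_lt_or_eq_dec => [Spos|S0].
- pose pn x t := / S * p x t.
  have iS : 0 < / S by apply: Rinv_0_lt_compat.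
  have pn0 x t : 0 <= pn x t by apply: Rmult_le_pos; [lra | exact: p0].
  have pn1 : \rsum_(x : bool) \rsum_(t : T) pn x t = 1.
    rewrite (eq_bigr _ (fun x _ => rsum_mulr _ _)) rsum_mulr.
    by rewrite -/S; field; lra.
  have scale (O : finType) (U : chan O) :
      is_channel U -> info (out pn U) = / S * info (out p U).
    move=> chU; rewrite -info_scale //; last exact: out_ge0.
    by apply: info_ext => t o; rewrite /out -rsum_mulr; apply: eq_bigr => x _; rewrite /pn; ring.
  have := lnVW T pn (conj pn0 pn1).
  rewrite -/(out pn W) -/(out pn V).
  rewrite (mutinfo_info (out_ge0 chW pn0)) ?(out_mass chW) //.
  rewrite (mutinfo_info (out_ge0 chV pn0)) ?(out_mass chV) //.
  rewrite !scale // => le_div.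
  apply: (Rmult_le_reg_l (/ S)) => //.
  apply: (Rmult_le_reg_r (/ ln 2)); first by apply/Rinv_0_lt_compat/ln2_pos.
  exact: le_div.
- have pz x t : p x t = 0.
    have := p0 x t; have := rsum_term t (p0 x).
    have := @rsum_term bool (fun x => \rsum_(t : T) p x t) x (fun x => rsum_ge0 (p0 x)).
    rewrite -/S -S0; lra.
  have zero (O : finType) (U : chan O) : info (out p U) = 0.
    rewrite -(info_zero T O); apply: info_ext => t o.
    by rewrite /out big1 // => x _; rewrite pz Rmult_0_l.
  by rewrite !zero; lra.
Qed.

(* Key step: with side output B whose joint law with (X, T) is r, replacing the
   channel W producing the other output by V does not decrease the information,
   since info(T; B) is the same for both and each conditional term increases. *)
Lemma info_le_side (B T : finType) (r : B -> bool -> T -> R) :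
  less_noisy_meas V W -> (forall b x t, 0 <= r b x t) ->
  info (fun t (o : B * Y) => \rsum_(x : bool) r o.1 x t * W x o.2)
  <= info (fun t (o : B * Z) => \rsum_(x : bool) r o.1 x t * V x o.2).
Proof.
move=> lnVW r0.
have side (O : finType) (U : chan O) : is_channel U ->
    info (fun t b => \rsum_(o : O) \rsum_(x : bool) r b x t * U x o)
    = info (fun t b => \rsum_(x : bool) r b x t).
  by move=> chU; apply: info_ext => t b; exact: (out_row chU (fun x t => r b x t)).
rewrite !info_chain /= (side _ _ chW) (side _ _ chV).
by apply/Rplus_le_compat_l/rsum_le => b; exact: lnVW.
Qed.

Lemma info_le_relabel (B T OW OV : finType) (qW : T -> OW -> R) (qV : T -> OV -> R)
    (fW : B * Y -> OW) (fV : B * Z -> OV) (r : B -> bool -> T -> R) :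
  less_noisy_meas V W -> bijective fW -> bijective fV -> (forall b x t, 0 <= r b x t) ->
  (forall t b y, qW t (fW (b, y)) = \rsum_(x : bool) r b x t * W x y) ->
  (forall t b z, qV t (fV (b, z)) = \rsum_(x : bool) r b x t * V x z) ->
  info qW <= info qV.
Proof.
move=> lnVW bW bV r0 eW eV.
rewrite (info_reindex qW bW) (info_reindex qV bV).
rewrite (info_ext (r := fun t (o : B * Y) => \rsum_(x : bool) r o.1 x t * W x o.2)).
  rewrite [X in _ <= X](info_ext (r := fun t (o : B * Z) => \rsum_(x : bool) r o.1 x t * V x o.2)).
    exact: info_le_side.
  by move=> t [b z]; exact: eV.
by move=> t [b y]; exact: eW.
Qed.

(* Pass through the hybrid output (y1, z2), in which
   only the copy of W producing y2 has been replaced by V: first replace that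
   copy (side output y1, input u2), then the copy producing y1 (side output z2,
   input u1 + u2). *)
Lemma less_noisy_meas_minus :
  less_noisy_meas V W -> less_noisy_meas (minus_chan V) (minus_chan W).
Proof.
move=> lnVW T p p0.
have [W0 _] := chW; have [V0 _] := chV.
pose hybrid t (o : Y * Z) :=
  \rsum_(u1 : bool) \rsum_(u2 : bool) p u1 t * (/ 2 * W (addb u1 u2) o.1 * V u2 o.2).
apply: (Rle_trans _ (info hybrid)).
- apply: (@info_le_relabel Y T _ _ _ _ idfun idfun
    (fun y1 x t => \rsum_(u1 : bool) p u1 t * (/ 2 * W (addb u1 x) y1))) => //.
  + by exists idfun.
  + by exists idfun.
  + move=> y1 x t; apply: rsum_ge0 => u1.
    by apply: Rmult_le_pos; [exact: p0 | apply: Rmult_le_pos; [lra | exact: W0]].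
  + by move=> t y1 y2; rewrite /out /minus_chan !big_bool /=; ring.
  + by move=> t y1 z2; rewrite /hybrid !big_bool /=; ring.
- apply: (@info_le_relabel Z T _ _ _ _ (fun o : Z * Y => (o.2, o.1)) (fun o : Z * Z => (o.2, o.1))
    (fun z2 x t => \rsum_(u2 : bool) p (addb x u2) t * (/ 2 * V u2 z2))) => //.
  + by exists (fun o => (o.2, o.1)) => -[].
  + by exists (fun o => (o.2, o.1)) => -[].
  + move=> z2 x t; apply: rsum_ge0 => u2.
    by apply: Rmult_le_pos; [exact: p0 | apply: Rmult_le_pos; [lra | exact: V0]].
  + by move=> t z2 y1; rewrite /hybrid !big_bool /=; ring.
  + by move=> t z2 z1; rewrite /out /minus_chan !big_bool /=; ring.
Qed.

(* V^+ is less noisy than W^+, through the hybrid output ((y1, z2), u1): first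
   replace the copy of W producing y2 (side output (y1, u1), input u2), then the
   copy producing y1 (side output (z2, u1), input u1 + u2). *)
Lemma less_noisy_meas_plus :
  less_noisy_meas V W -> less_noisy_meas (plus_chan V) (plus_chan W).
Proof.
move=> lnVW T p p0.
have [W0 _] := chW; have [V0 _] := chV.
pose hybrid t (o : Y * Z * bool) :=
  \rsum_(u2 : bool) p u2 t * (/ 2 * W (addb o.2 u2) o.1.1 * V u2 o.1.2).
apply: (Rle_trans _ (info hybrid)).
- apply: (@info_le_relabel (Y * bool)%type T _ _ _ _
    (fun o : Y * bool * Y => ((o.1.1, o.2), o.1.2)) (fun o : Y * bool * Z => ((o.1.1, o.2), o.1.2))
    (fun b x t => p x t * (/ 2 * W (addb b.2 x) b.1))) => //.
  + by exists (fun o => ((o.1.1, o.2), o.1.2)) => -[[]].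
  + by exists (fun o => ((o.1.1, o.2), o.1.2)) => -[[]].
  + move=> b x t.
    by apply: Rmult_le_pos; [exact: p0 | apply: Rmult_le_pos; [lra | exact: W0]].
  + by move=> t [y1 u1] y2; rewrite /out /plus_chan !big_bool /=; ring.
  + by move=> t [y1 u1] z2; rewrite /hybrid !big_bool /=; ring.
- apply: (@info_le_relabel (Z * bool)%type T _ _ _ _
    (fun o : Z * bool * Y => ((o.2, o.1.1), o.1.2)) (fun o : Z * bool * Z => ((o.2, o.1.1), o.1.2))
    (fun b x t => p (addb b.2 x) t * (/ 2 * V (addb b.2 x) b.1))) => //.
  + by exists (fun o => ((o.1.2, o.2), o.1.1)) => -[[]].
  + by exists (fun o => ((o.1.2, o.2), o.1.1)) => -[[]].
  + move=> b x t.
    by apply: Rmult_le_pos; [exact: p0 | apply: Rmult_le_pos; [lra | exact: V0]].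
  + by move=> t [z2 []] y1; rewrite /hybrid !big_bool /=; ring.
  + by move=> t [z2 []] z1; rewrite /out /plus_chan !big_bool /=; ring.
Qed.

End LessNoisyMeasure.

Lemma minus_channel (Y : finType) (W : chan Y) : is_channel W -> is_channel (minus_chan W).
Proof.
move=> [W0 W1]; split=> [u y|u].
  apply: rsum_ge0 => u2.
  by apply: Rmult_le_pos; [apply: Rmult_le_pos; [lra | exact: W0] | exact: W0].
rewrite /minus_chan exchange_big /= big_bool.
by rewrite !(rsum_prod (fun a => / 2 * W _ a) (W _)) !rsum_mulr !W1 /=; field.
Qed.

Lemma plus_channel (Y : finType) (W : chan Y) : is_channel W -> is_channel (plus_chan W).
Proof.
move=> [W0 W1]; split=> [u y|u].
  by apply: Rmult_le_pos; [apply: Rmult_le_pos; [lra | exact: W0] | exact: W0].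
rewrite /plus_chan rsum_pair exchange_big /= big_bool.
by rewrite !(rsum_prod (fun a => / 2 * W _ a) (W _)) !rsum_mulr !W1 /=; field.
Qed.

Lemma polar_less_noisy_meas (s : seq bool) : forall (Y Z : finType) (W : chan Y) (V : chan Z),
  is_channel W -> is_channel V -> less_noisy_meas V W ->
  [/\ less_noisy_meas (polar s V) (polar s W), is_channel (polar s W) & is_channel (polar s V)].
Proof.
elim: s => [|[] s IH] Y Z W V chW chV lnVW //=; apply: IH.
- exact: plus_channel.
- exact: plus_channel.
- exact: less_noisy_meas_plus.
- exact: minus_channel.
- exact: minus_channel.
- exact: less_noisy_meas_minus.
Qed.

(* The symmetric capacity is the information of T = X with X uniform. *)
Lemma symcap_le_of_less_noisy (Y Z : finType) (W : chan Y) (V : chan Z) :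
  less_noisy V W -> symcap W <= symcap V.
Proof.
move=> lnVW; pose p (x t : bool) := if x == t then / 2 else 0.
have p_dist : is_dist2 p.
  by split=> [x t|]; rewrite /p; [case: (x == t); lra | rewrite !big_bool /=; field].
have uniform (O : finType) (U : chan O) : symcap U = mutinfo (out p U).
  by apply: mutinfo_ext => t o; rewrite /out big_bool /p; case: t => /=; ring.
by rewrite !uniform; exact: lnVW.
Qed.

Theorem mainTheorem9 (Y Z : finType) (W : chan Y) (V : chan Z) :
  is_channel W -> is_channel V -> less_noisy V W ->
  forall s : seq bool, s <> [::] ->
    less_noisy (polar s V) (polar s W) /\
    symcap (polar s W) <= symcap (polar s V).
Proof.
move=> chW chV lnVW s _.
have [lnVWs chWs chVs] := polar_less_noisy_meas s chW chV (meas_of_less_noisy chW chV lnVW).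
have lns := less_noisy_of_meas chWs chVs lnVWs.
by split; [exact: lns | exact: symcap_le_of_less_noisy].
Qed.
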